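(* Consider a prepare-and-measure QKD protocol in which Alice prepares states $\{\rho_i^\mu\}\subset\mathcal{S}(A'')$ with probabilities $p(i,\mu)$, recording $(i,\mu)$ in a classical register $A$, and a virtual protocol identical to it except that the prepared states are $\{\xi_i^\mu\}\subset\mathcal{S}(A')$. Suppose there exists a quantum channel $\Psi$ from $A'$ to $A''$ (a source map) with $\rho_i^\mu=\Psi[\xi_i^\mu]$ for all $i,\mu$. Then $\varepsilon_{\mathrm{sec}}$-secrecy of the virtual protocol implies $\varepsilon_{\mathrm{sec}}$-secrecy of the real protocol.
   Context: $\mathcal{S}(H)$ denotes the density operators on $H$. A prepare-and-measure protocol with per-round prepared state $\rho^{\mathrm{prep}}_{AX}=\sum_{i,\mu}p(i,\mu)|i,\mu\rangle\langle i,\mu|_A\otimes\rho_i^\mu$ (Alice keeps $A$, sends $X$) and protocol map $\mathcal{E}^{(l)}$, ideal map $\mathcal{E}^{(l),\mathrm{ideal}}$ acting on $A^nB^n$ (the same maps for the real and virtual protocols), is $\varepsilon_{\mathrm{sec}}$-secret if $\tfrac12\|((\mathcal{E}^{(l)}-\mathcal{E}^{(l),\mathrm{ideal}})\otimes\mathrm{id}_{E^n})[(\mathrm{id}_{A^n}\otimes\Phi)(\rho^{\mathrm{prep}\,\otimes n}_{AX})]\|_1\leq\varepsilon_{\mathrm{sec}}$ for all channels $\Phi$ from $X^n$ to $B^nE^n$; $X=A''$ for the real and $X=A'$ for the virtual protocol. The ideal map replaces the key on acceptance by a uniformly random key of the same length independent of other outputs. *)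

From Stdlib Require Import ClassicalEpsilon.
From mathcomp Require Import all_boot all_order all_algebra all_field.
Set Implicit Arguments. Unset Strict Implicit. Unset Printing Implicit Defensive.
Import Order.TTheory GRing.Theory Num.Theory.
Local Open Scope ring_scope.

(* A finite-dimensional quantum system is given by a finite type indexing an
   orthonormal basis; operators on it are complex matrices indexed by it. *)
Definition op (T : finType) := T -> T -> algC.
Definition qmap (T U : finType) := op T -> op U.

Definition op_add T (X Y : op T) : op T := fun i j => X i j + Y i j.
Definition op_sub T (X Y : op T) : op T := fun i j => X i j - Y i j.
Definition op_scale T (a : algC) (X : op T) : op T := fun i j => a * X i j.
Definition op_mul T (X Y : op T) : op T := fun i j => \sum_k X i k * Y k j.
Definition op_adj T (X : op T) : op T := fun i j => (X j i)^*.
Definition op_tr T (X : op T) : algC := \sum_i X i i.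

Definition psd T (X : op T) : Prop :=
  (forall i j, X i j = (X j i)^*) /\
  (forall v : T -> algC, 0 <= \sum_i \sum_j (v i)^* * X i j * v j).

Definition density T (X : op T) : Prop := psd X /\ op_tr X = 1.

Definition trnorm T (X : op T) : algC :=
  epsilon (inhabits 0) (fun t => exists S : op T,
     psd S /\ op_mul S S = op_mul (op_adj X) X /\ t = op_tr S).

Definition id_tensor (R T U : finType) (Phi : qmap T U) : qmap (R * T)%type (R * U)%type :=
  fun M ru ru' => Phi (fun t t' => M (ru.1, t) (ru'.1, t')) ru.2 ru'.2.
Definition tensor_id (R T U : finType) (Phi : qmap T U) : qmap (T * R)%type (U * R)%type :=
  fun M ur ur' => Phi (fun t t' => M (t, ur.2) (t', ur'.2)) ur.1 ur'.1.

Definition linear_qmap T U (Phi : qmap T U) : Prop :=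
  forall (a : algC) (X Y : op T),
    Phi (op_add (op_scale a X) Y) = op_add (op_scale a (Phi X)) (Phi Y).
Definition trace_preserving T U (Phi : qmap T U) : Prop :=
  forall X, op_tr (Phi X) = op_tr X.
Definition completely_positive T U (Phi : qmap T U) : Prop :=
  forall (R : finType) (M : op (R * T)%type), psd M -> psd (@id_tensor R T U Phi M).
Definition channel T U (Phi : qmap T U) : Prop :=
  [/\ linear_qmap Phi, completely_positive Phi & trace_preserving Phi].

(* prepared state rho^prep_{AX} = sum_l p(l) |l><l|_A (x) rho_l, with the
   classical register A having basis L (labels l = (i, mu)). *)
Definition prep_state (L X : finType) (p : L -> algC) (rho : L -> op X)
  : op (L * X)%type :=
  fun ax ax' => if ax.1 == ax'.1 then p ax.1 * rho ax.1 ax.2 ax'.2 else 0.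

(* rho^{prep (x) n}, with subsystems regrouped as A^n X^n *)
Definition tensor_pow_prep (L X : finType) (n : nat) (rho : op (L * X)%type)
  : op (n.-tuple L * n.-tuple X)%type :=
  fun ax ax' => \prod_(k < n)
     rho (tnth ax.1 k, tnth ax.2 k) (tnth ax'.1 k, tnth ax'.2 k).

Definition reassoc (P Q S : finType) (M : op (P * (Q * S))%type) : op ((P * Q) * S)%type :=
  fun x y => M (x.1.1, (x.1.2, x.2)) (y.1.1, (y.1.2, y.2)).

Definition sec_quantity (L X B K Ev : finType) (n : nat)
  (p : L -> algC) (rho : L -> op X)
  (Eprot Eideal : qmap (n.-tuple L * n.-tuple B)%type K)
  (Phi : qmap (n.-tuple X) (n.-tuple B * n.-tuple Ev)%type) : algC :=
  let st := reassoc (@id_tensor (n.-tuple L) _ _ Phi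
                      (@tensor_pow_prep L X n (prep_state p rho))) in
  trnorm (op_sub (@tensor_id (n.-tuple Ev) _ _ Eprot st)
                 (@tensor_id (n.-tuple Ev) _ _ Eideal st)) / 2.

Definition eps_secret (L X B K : finType) (n : nat)
  (p : L -> algC) (rho : L -> op X)
  (Eprot Eideal : qmap (n.-tuple L * n.-tuple B)%type K) (eps : algC) : Prop :=
  forall (Ev : finType) (Phi : qmap (n.-tuple X) (n.-tuple B * n.-tuple Ev)%type),
    channel Phi -> @sec_quantity L X B K Ev n p rho Eprot Eideal Phi <= eps.

(** A source map turns any attack on the real protocol into an attack on the
    virtual one: if [rho_l = Psi xi_l], then feeding the virtual prepared
    state through [Psi] on each of the [n] transmitted systems yields exactly
    the real prepared state, so the real-protocol output under an attack
    [Phi] coincides with the virtual-protocol output under the attack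
    [Phi \o Psi^(x)n], which is again a channel. *)
From mathcomp Require Import all_boot all_order all_algebra all_field.
From Stdlib Require Import FunctionalExtensionality.
Import Order.TTheory GRing.Theory Num.Theory.
Local Open Scope ring_scope.
Set Implicit Arguments. Unset Strict Implicit.

Lemma op_ext (T : finType) (X Y : op T) : (forall i j, X i j = Y i j) -> X = Y.
Proof.
by move=> eXY; apply: functional_extensionality => i;
  apply: functional_extensionality => j; exact: eXY.
Qed.

Section LinearMaps.
Variables (T U : finType) (F : qmap T U).
Hypothesis linF : linear_qmap F.

Lemma linear_qmap0 : F (fun _ _ => 0) = (fun _ _ => 0).
Proof.
have := linF 1 (fun _ _ => 0) (fun _ _ => 0).
have -> : op_add (op_scale 1 (fun _ _ : T => 0)) (fun _ _ => 0) = (fun _ _ => 0).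
  by apply: op_ext => i j; rewrite /op_add /op_scale mulr0 addr0.
move=> eF0; apply: op_ext => i j.
have := congr1 (fun Z => Z i j) eF0; rewrite /op_add /op_scale mul1r => e.
by apply: (addrI (F (fun _ _ => 0) i j)); rewrite addr0 -e.
Qed.

Lemma linear_qmapZ a X : F (op_scale a X) = op_scale a (F X).
Proof.
have := linF a X (fun _ _ => 0); rewrite linear_qmap0 => e.
apply: op_ext => i j; have := congr1 (fun Z => Z i j) e.
rewrite /op_add addr0 => <-; congr (F _ i j).
by apply: op_ext => i' j'; rewrite addr0.
Qed.

End LinearMaps.

Definition qcomp (T U V : finType) (F : qmap U V) (G : qmap T U) : qmap T V :=
  fun M => F (G M).

(* [relabel f M = V^* M V] for the linear map [V : |u> |-> |f u>]; for
   bijective [f] it is a unitary conjugation. *)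
Definition relabel (T U : finType) (f : U -> T) : qmap T U :=
  fun M u u' => M (f u) (f u').

Lemma linear_relabel (T U : finType) (f : U -> T) : linear_qmap (relabel f).
Proof. by []. Qed.

Lemma linear_qcomp (T U V : finType) (F : qmap U V) (G : qmap T U) :
  linear_qmap F -> linear_qmap G -> linear_qmap (qcomp F G).
Proof. by move=> linF linG a X Y; rewrite /qcomp linG linF. Qed.

Lemma linear_id_tensor (S T U : finType) (F : qmap T U) :
  linear_qmap F -> linear_qmap (@id_tensor S T U F).
Proof.
move=> linF a X Y; apply: op_ext => su su'.
exact: (congr1 (fun Z => Z su.2 su'.2)
         (linF a (fun t t' => X (su.1, t) (su'.1, t'))
                 (fun t t' => Y (su.1, t) (su'.1, t')))).
Qed.

Lemma tensor_idE (S T U : finType) (F : qmap T U) :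
  @tensor_id S T U F =
  qcomp (relabel (fun x : U * S => (x.2, x.1)))
        (qcomp (@id_tensor S T U F) (relabel (fun x : S * T => (x.2, x.1)))).
Proof. by []. Qed.

Lemma linear_tensor_id (S T U : finType) (F : qmap T U) :
  linear_qmap F -> linear_qmap (@tensor_id S T U F).
Proof.
move=> linF; rewrite tensor_idE; apply: linear_qcomp => //.
exact/linear_qcomp/linear_relabel/linear_id_tensor.
Qed.

Lemma psd_relabel (T U : finType) (f : U -> T) (M : op T) :
  psd M -> psd (relabel f M).
Proof.
case=> hermM posM; split=> [i j|v]; first exact: hermM.
pose w t := \sum_(u | f u == t) v u.
suff -> : \sum_i \sum_j (v i)^* * relabel f M i j * v j
        = \sum_i \sum_j (w i)^* * M i j * w j by exact: posM.
rewrite /relabel; transitivity (\sum_u \sum_t' (v u)^* * M (f u) t' * w t').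
  apply: eq_bigr => u _; rewrite (partition_big f predT) //=.
  apply: eq_bigr => t' _; rewrite /w mulr_sumr.
  by apply: eq_bigr => u' /eqP ->.
rewrite (partition_big f predT) //=; apply: eq_bigr => t _.
rewrite exchange_big /=; apply: eq_bigr => t' _.
rewrite /w rmorph_sum /= !mulr_suml.
by apply: eq_bigr => u /eqP ->.
Qed.

Lemma channel_qcomp (T U V : finType) (F : qmap U V) (G : qmap T U) :
  channel F -> channel G -> channel (qcomp F G).
Proof.
case=> linF cpF tpF [linG cpG tpG]; split.
- exact: linear_qcomp.
- by move=> R M psdM; exact: (cpF R _ (cpG R M psdM)).
- by move=> X; rewrite /qcomp tpF tpG.
Qed.

Lemma channel_relabel (T U : finType) (f : U -> T) :
  bijective f -> channel (relabel f).
Proof.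
move=> bij_f; split=> [//|R M psdM|X].
- exact: (psd_relabel (fun ru : R * U => (ru.1, f ru.2)) psdM).
- by rewrite /op_tr /relabel [RHS](reindex f) //; exact: onW_bij.
Qed.

Lemma channel_id_tensor (S T U : finType) (F : qmap T U) :
  channel F -> channel (@id_tensor S T U F).
Proof.
case=> linF cpF tpF; split.
- exact: linear_id_tensor.
- move=> R M psdM.
  (* [id_(R*S) (x) F] acting on [M], up to reassociating [R * (S * T)] *)
  exact: (psd_relabel (fun x : R * (S * U) => ((x.1, x.2.1), x.2.2))
           (cpF _ _ (psd_relabel (fun y : (R * S) * T => (y.1.1, (y.1.2, y.2))) psdM))).
- move=> X; rewrite /op_tr /id_tensor.
  transitivity (\sum_s \sum_u F (fun t t' => X (s, t) (s, t')) u u).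
    by rewrite pair_big.
  transitivity (\sum_s \sum_t X (s, t) (s, t)).
    by apply: eq_bigr => s _; exact: tpF.
  by rewrite pair_big; apply: eq_bigr => -[].
Qed.

Lemma channel_tensor_id (S T U : finType) (F : qmap T U) :
  channel F -> channel (@tensor_id S T U F).
Proof.
have swap_bij (P Q : finType) : bijective (fun x : P * Q => (x.2, x.1)).
  by exists (fun x => (x.2, x.1)) => -[].
move=> chF; rewrite tensor_idE.
apply: channel_qcomp; first exact/channel_relabel/swap_bij.
by apply: channel_qcomp; [exact: channel_id_tensor | exact/channel_relabel/swap_bij].
Qed.

Section TupleSplit.
Variables (X : finType) (m : nat).

Definition tuple_uncons (t : m.+1.-tuple X) : X * m.-tuple X :=
  (thead t, [tuple of behead t]).
Definition tuple_cons (xt : X * m.-tuple X) : m.+1.-tuple X :=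
  [tuple of xt.1 :: xt.2].

Lemma tuple_unconsE x (t : m.-tuple X) : tuple_uncons [tuple of x :: t] = (x, t).
Proof. by rewrite /tuple_uncons theadE; congr pair; exact: val_inj. Qed.

Lemma tuple_unconsK : cancel tuple_uncons tuple_cons.
Proof. by move=> t; rewrite /tuple_cons /tuple_uncons /= -tuple_eta. Qed.

Lemma tuple_consK : cancel tuple_cons tuple_uncons.
Proof. by case=> x t; exact: tuple_unconsE. Qed.

Lemma tuple_cons_bij : bijective tuple_cons.
Proof. exact: Bijective tuple_consK tuple_unconsK. Qed.

Lemma tuple_uncons_bij : bijective tuple_uncons.
Proof. exact: Bijective tuple_unconsK tuple_consK. Qed.

End TupleSplit.

(* [Psi^(x)(m+1)] acts as [Psi (x) Psi^(x)m] after splitting off the first factor. *)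
Fixpoint tensor_pow_map (X1 X2 : finType) (Psi : qmap X1 X2) (n : nat)
  : qmap (n.-tuple X1) (n.-tuple X2) :=
  match n with
  | 0 => relabel (fun _ : 0.-tuple X2 => [tuple] : 0.-tuple X1)
  | m.+1 => qcomp (relabel (@tuple_uncons X2 m))
             (qcomp (@tensor_id _ _ _ Psi)
               (qcomp (@id_tensor X1 _ _ (@tensor_pow_map X1 X2 Psi m))
                      (relabel (@tuple_cons X1 m))))
  end.
Arguments tensor_pow_map {X1 X2} Psi n.

Definition prod_op (L X : finType) (n : nat) (s : L -> op X) (a : n.-tuple L)
  : op (n.-tuple X) :=
  fun x x' => \prod_(k < n) s (tnth a k) (tnth x k) (tnth x' k).

Lemma channel_tensor_pow_map (X1 X2 : finType) (Psi : qmap X1 X2) n :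
  channel Psi -> channel (tensor_pow_map Psi n).
Proof.
move=> chPsi; elim: n => [|m IHm] /=.
  by apply: channel_relabel; exists (fun _ => [tuple]) => t; rewrite [t]tuple0 ?[RHS]tuple0.
apply: channel_qcomp; first exact/channel_relabel/tuple_uncons_bij.
apply: channel_qcomp; first exact: channel_tensor_id.
apply: channel_qcomp; first exact: channel_id_tensor.
exact/channel_relabel/tuple_cons_bij.
Qed.

Section TensorPower.
Variables (X1 X2 : finType) (Psi : qmap X1 X2).
Hypothesis linPsi : linear_qmap Psi.

Lemma linear_tensor_pow_map n : linear_qmap (tensor_pow_map Psi n).
Proof.
elim: n => [|m IHm] /=; first exact: linear_relabel.
apply: linear_qcomp; first exact: linear_relabel.
apply: linear_qcomp; first exact: linear_tensor_id.
exact/linear_qcomp/linear_relabel/linear_id_tensor.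
Qed.

Lemma tensor_pow_map_prod (L : finType) (xi : L -> op X1) n (a : n.-tuple L) :
  tensor_pow_map Psi n (prod_op xi a) = prod_op (fun l => Psi (xi l)) a.
Proof.
elim: n a => [|m IHm] a; first by apply: op_ext => i j; rewrite /= /relabel /prod_op !big_ord0.
case/tupleP: a => a0 a.
have prod_cons (Y : finType) (s : L -> op Y) (x0 x0' : Y) (x x' : m.-tuple Y) :
    prod_op s [tuple of a0 :: a] [tuple of x0 :: x] [tuple of x0' :: x']
    = s a0 x0 x0' * prod_op s a x x'.
  rewrite /prod_op big_ord_recl !tnth0; congr (_ * _).
  by apply: eq_bigr => k _; rewrite !tnthS.
have split_first : relabel (@tuple_cons X1 m) (prod_op xi [tuple of a0 :: a])
    = fun y y' => xi a0 y.1 y'.1 * prod_op xi a y.2 y'.2.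
  by apply: op_ext => -[x0 x] [x0' x']; rewrite /relabel /tuple_cons prod_cons.
have apply_rest : id_tensor (tensor_pow_map Psi m)
      (fun y y' => xi a0 y.1 y'.1 * prod_op xi a y.2 y'.2)
    = fun y y' => xi a0 y.1 y'.1 * prod_op (fun l => Psi (xi l)) a y.2 y'.2.
  apply: op_ext => y y'; rewrite /id_tensor.
  transitivity (tensor_pow_map Psi m (op_scale (xi a0 y.1 y'.1) (prod_op xi a)) y.2 y'.2).
    by [].
  by rewrite linear_qmapZ ?IHm //; exact: linear_tensor_pow_map.
apply: op_ext => x x'; case/tupleP: x => x0 x; case/tupleP: x' => x0' x'.
rewrite /= /qcomp split_first apply_rest /relabel !tuple_unconsE /tensor_id /= prod_cons.
have -> : (fun t t' => xi a0 t t' * prod_op (fun l => Psi (xi l)) a x x')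
    = op_scale (prod_op (fun l => Psi (xi l)) a x x') (xi a0).
  by apply: op_ext => t t'; rewrite /op_scale mulrC.
by rewrite linear_qmapZ // /op_scale mulrC.
Qed.

Lemma id_tensor_pow_map_prep (L : finType) (p : L -> algC) (xi : L -> op X1) n :
  @id_tensor (n.-tuple L) _ _ (tensor_pow_map Psi n) (tensor_pow_prep (n:=n) (prep_state p xi))
  = tensor_pow_prep (n:=n) (prep_state p (fun l => Psi (xi l))).
Proof.
have linN := linear_tensor_pow_map (n:=n).
apply: op_ext => -[a x] [a' x']; rewrite /id_tensor /=.
have [<- | neq_aa'] := eqVneq a a'.
  have block_prod (Y : finType) (s : L -> op Y) (y y' : n.-tuple Y) :
      tensor_pow_prep (n:=n) (prep_state p s) (a, y) (a, y')
      = op_scale (\prod_(k < n) p (tnth a k)) (prod_op s a) y y'.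
    rewrite /tensor_pow_prep /prep_state /op_scale /prod_op /= -big_split.
    by apply: eq_bigr => k _; rewrite eqxx.
  have -> : (fun y y' => tensor_pow_prep (n:=n) (prep_state p xi) (a, y) (a, y'))
      = op_scale (\prod_(k < n) p (tnth a k)) (prod_op xi a).
    by apply: op_ext => y y'; exact: block_prod.
  by rewrite linear_qmapZ // tensor_pow_map_prod block_prod.
have [k neq_k] : exists k, tnth a k != tnth a' k.
  apply/existsP; apply: contraR neq_aa'; rewrite negb_exists => /forallP eq_k.
  by apply/eqP/eq_from_tnth => k; apply/eqP; rewrite -[_ == _]negbK eq_k.
have block0 (Y : finType) (s : L -> op Y) (y y' : n.-tuple Y) :
    tensor_pow_prep (n:=n) (prep_state p s) (a, y) (a', y') = 0.
  by rewrite /tensor_pow_prep /prep_state /= (bigD1 k) //= (negbTE neq_k) mul0r.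
have -> : (fun y y' => tensor_pow_prep (n:=n) (prep_state p xi) (a, y) (a', y'))
    = (fun _ _ => 0) by apply: op_ext => y y'; exact: block0.
by rewrite linear_qmap0 // block0.
Qed.

End TensorPower.

Lemma sec_quantity_source_map (L X1 X2 B K Ev : finType) (n : nat)
    (p : L -> algC) (xi : L -> op X1) (Psi : qmap X1 X2)
    (Eprot Eideal : qmap (n.-tuple L * n.-tuple B)%type K)
    (Phi : qmap (n.-tuple X2) (n.-tuple B * n.-tuple Ev)%type) :
  channel Psi ->
  sec_quantity p (fun l => Psi (xi l)) Eprot Eideal Phi
  = sec_quantity p xi Eprot Eideal (qcomp Phi (tensor_pow_map Psi n)).
Proof.
by case=> linPsi _ _; rewrite /sec_quantity -(id_tensor_pow_map_prep linPsi).
Qed.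

Unset Implicit Arguments.

Theorem lemma8 (L X' X'' B K : finType) (n : nat) (p : L -> algC)
  (xi : L -> op X') (rho : L -> op X'')
  (Eprot Eideal : qmap (n.-tuple L * n.-tuple B)%type K) (eps : algC) :
  (forall l, 0 <= p l) -> \sum_l p l = 1 ->
  (forall l, density (xi l)) -> (forall l, density (rho l)) ->
  channel Eprot -> channel Eideal ->
  (exists Psi : qmap X' X'', channel Psi /\ forall l, rho l = Psi (xi l)) ->
  @eps_secret L X' B K n p xi Eprot Eideal eps ->
  @eps_secret L X'' B K n p rho Eprot Eideal eps.
Proof.
move=> _ _ _ _ _ _ [Psi [chPsi rhoE]] secret_xi Ev Phi chPhi.
have -> : rho = (fun l => Psi (xi l)) by exact: functional_extensionality.
rewrite sec_quantity_source_map //.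
by apply/secret_xi/channel_qcomp => //; exact: channel_tensor_pow_map.
Qed.
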